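(* A finite graph $K$ is vertex-costly if and only if it is connected. Moreover, every finite connected graph $K$ without hanging edges is vertex-costly in the class of connected graphs.
   Context: ''Graph'' may be understood in any of the usual senses (directed, undirected, or mixed; multiple edges and/or loops allowed or not), fixed throughout; isomorphisms and automorphisms preserve the corresponding structure. ''Subgraph'' means an arbitrary (not necessarily induced) subgraph. For a finite graph $K$ and a graph $\Gamma$, the vertex representativeness $\Upsilon_v(K,\Gamma)$ is the minimal integer $n$ such that $\Gamma$ has a set $X$ of $n$ vertices with the property that every subgraph of $\Gamma$ isomorphic to $K$ contains a vertex of $X$; the symmetric vertex representativeness $\Upsilon_v^{\mathrm{sym}}(K,\Gamma)$ is the minimal $n$ such that such a set $X$ of $n$ vertices exists which is moreover invariant under $\mathrm{Aut}\,\Gamma$. A finite graph $K$ with $k$ vertices is vertex-costly if for every integer $m$ there exists a graph $\Gamma_m$ with $\Upsilon_v^{\mathrm{sym}}(K,\Gamma_m)=k\cdot\Upsilon_v(K,\Gamma_m)\ge m$; it is vertex-costly in a class of graphs $\mathcal{K}$ if the graphs $\Gamma_m$ can be chosen in $\mathcal{K}$. A hanging edge is an edge incident to a vertex of degree one. *)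

From mathcomp Require Import all_boot.
From Stdlib Require List.
From Stdlib Require Import Relation_Operators.

Set Implicit Arguments.
Unset Strict Implicit.
Unset Printing Implicit Defensive.

Definition is_graph (V : Type) (adj : V -> V -> Prop) : Prop :=
  (forall u v, adj u v -> adj v u) /\ (forall v, ~ adj v v).

Definition connected (V : Type) (adj : V -> V -> Prop) : Prop :=
  (exists v : V, True) /\ forall u v : V, clos_refl_trans V adj u v.

Definition iso_subgraph (T : finType) (e : rel T) (V : Type)
    (adj : V -> V -> Prop) (W : V -> Prop) (F : V -> V -> Prop) : Prop :=
  (forall u v, F u v -> [/\ adj u v, W u & W v]) /\
  (forall u v, F u v -> F v u) /\
  exists f : T -> V,
    [/\ injective f,
        (forall v, W v <-> exists x, f x = v) &
        (forall x y, e x y <-> F (f x) (f y))].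

Definition represents (T : finType) (e : rel T) (V : Type)
    (adj : V -> V -> Prop) (X : list V) : Prop :=
  forall W F, iso_subgraph e adj W F -> exists v, W v /\ List.In v X.

Definition automorphism (V : Type) (adj : V -> V -> Prop) (s : V -> V) : Prop :=
  bijective s /\ forall u v, adj u v <-> adj (s u) (s v).

Definition aut_invariant (V : Type) (adj : V -> V -> Prop) (X : list V) : Prop :=
  forall s, automorphism adj s -> forall v, List.In v X <-> List.In (s v) X.

Definition has_rep (T : finType) (e : rel T) (V : Type)
    (adj : V -> V -> Prop) (n : nat) : Prop :=
  exists X : list V, [/\ List.NoDup X, List.length X = n & represents e adj X].

Definition has_sym_rep (T : finType) (e : rel T) (V : Type)
    (adj : V -> V -> Prop) (n : nat) : Prop :=
  exists X : list V,
    [/\ List.NoDup X, List.length X = n, represents e adj X & aut_invariant adj X].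

Definition upsilon_v (T : finType) (e : rel T) (V : Type)
    (adj : V -> V -> Prop) (n : nat) : Prop :=
  has_rep e adj n /\ forall m, has_rep e adj m -> n <= m.

Definition upsilon_v_sym (T : finType) (e : rel T) (V : Type)
    (adj : V -> V -> Prop) (n : nat) : Prop :=
  has_sym_rep e adj n /\ forall m, has_sym_rep e adj m -> n <= m.

Definition vertex_costly_in
    (P : forall V : Type, (V -> V -> Prop) -> Prop)
    (T : finType) (e : rel T) : Prop :=
  forall m : nat, exists (V : Type) (adj : V -> V -> Prop) (u : nat),
    [/\ is_graph adj, P V adj, upsilon_v e adj u,
        upsilon_v_sym e adj (#|T| * u) & m <= #|T| * u].

Definition vertex_costly (T : finType) (e : rel T) : Prop :=
  vertex_costly_in (fun V adj => True) e.

Definition degree (T : finType) (e : rel T) (x : T) : nat := #|[set y | e x y]|.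

Definition no_hanging_edges (T : finType) (e : rel T) : Prop :=
  ~ exists x y, [/\ e x y & (degree e x = 1 \/ degree e y = 1)].

(* Let K be connected with k vertices.  In a disjoint union of m cliques K_k the
   copies of K are exactly the m cliques, and automorphisms act transitively on
   each of them, so one vertex per clique represents K while an invariant
   representing set must contain all k m vertices.  If K has no hanging edge and
   k > 1, every vertex of K has degree at least 2; joining each clique vertex to a
   common hub by a path with more than k vertices makes the host connected
   without creating new copies, since a copy entering such a path would have to
   contain all of it.  For k = 1 a complete graph does.

   Conversely, Upsilon_sym <= k Upsilon for every K: the vertices lying in at
   least a 1/k fraction of the minimum representing sets form an invariant
   representing set, because each copy has k vertices and meets every minimum
   representing set.  If K is the disjoint union of K1 and K2, of orders k1 and
   k2, a minimum representing set X either represents K2, or misses some copy of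
   K2, and adding that copy to X gives a set representing K1.  This yields
   Upsilon_sym <= max (k2 Upsilon, k1 (Upsilon + k2)), which is smaller than
   k Upsilon as soon as Upsilon > k. *)

From mathcomp Require Import all_boot perm boolp zify.
From Stdlib Require List.
From Stdlib Require Import Relation_Operators Operators_Properties.

Set Implicit Arguments.
Unset Strict Implicit.
Unset Printing Implicit Defensive.

Lemma In_mem (T : eqType) (x : T) (s : seq T) : List.In x s <-> x \in s.
Proof.
elim: s => [|y s IH] //=; rewrite in_cons; split.
- by case=> [->|/IH ->]; rewrite ?eqxx ?orbT.
- by case/orP=> [/eqP ->|/IH]; [left|right].
Qed.

Lemma NoDup_uniq (T : eqType) (s : seq T) : List.NoDup s <-> uniq s.
Proof.
elim: s => [|y s IH] /=; first by split=> // _; constructor.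
split=> [nd|/andP [ys us]].
- by inversion nd; subst; apply/andP; split; [apply/negP => /In_mem | apply/IH].
- by constructor; [rewrite In_mem; apply/negP | apply/IH].
Qed.

Lemma length_size T (s : seq T) : List.length s = size s.
Proof. by elim: s => //= _ s ->. Qed.

Lemma clos_refl_trans_const (A B : Type) (r : A -> A -> Prop) (h : A -> B) :
  (forall a b, r a b -> h a = h b) -> forall a b, clos_refl_trans A r a b -> h a = h b.
Proof. by move=> hr a b; elim=> [? ? /hr | | ? ? ? _ -> _ ->]. Qed.

Lemma clos_refl_trans_sym (A : Type) (r : A -> A -> Prop) :
  (forall a b, r a b -> r b a) ->
  forall a b, clos_refl_trans A r a b -> clos_refl_trans A r b a.
Proof.
move=> r_sym a b; elim=> [x y /r_sym rxy | x | x y z _ yx _ zy].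
- exact: rt_step.
- exact: rt_refl.
- exact: rt_trans zy yx.
Qed.

Lemma clos_refl_trans_first_step (A : Type) (r : A -> A -> Prop) a b :
  a <> b -> clos_refl_trans A r a b -> exists c, r a c.
Proof.
move=> nab rab; case: (clos_rt_rt1n _ _ _ _ rab) nab => [|c d rac _ _]; first by [].
by exists c.
Qed.

Lemma connect_clos_refl_trans (T : finType) (e : rel T) x y :
  connect e x y -> clos_refl_trans T (fun a b => e a b) x y.
Proof.
move=> /connectP [p]; elim: p x => [|z p IH] x /=; first by move=> _ ->; apply: rt_refl.
by case/andP=> exz pz yz; apply: rt_trans (rt_step _ _ _ _ exz) (IH z pz yz).
Qed.

Lemma nat_interval_const (P : pred nat) a b :
  (forall q, a <= q < b -> P q = P q.+1) -> forall q, a <= q <= b -> P q = P a.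
Proof.
move=> step; elim=> [|q IH] /andP [aq qb]; first by move: aq; rewrite leqn0 => /eqP ->.
have [->|neq] := eqVneq a q.+1; first by [].
by rewrite -step ?IH //; lia.
Qed.

Section Copies.
Variables (T : finType) (e : rel T) (V : Type) (adj : V -> V -> Prop).

Definition copy_set (W : V -> Prop) : Prop := exists F, iso_subgraph e adj W F.

Lemma automorphism_inv s : automorphism adj s ->
  exists2 g, automorphism adj g & cancel s g /\ cancel g s.
Proof.
move=> [[g sg gs] s_adj]; exists g => //; split; first by exists s.
by move=> u v; rewrite (s_adj (g u)) !gs.
Qed.

Lemma automorphism_inj s : automorphism adj s -> injective s.
Proof. by case=> /bij_inj. Qed.

Lemma involutive_automorphism s : involutive s ->
  (forall u v, adj u v -> adj (s u) (s v)) -> automorphism adj s.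
Proof.
move=> sK s_adj; split; first exact: inv_bij.
by move=> u v; split=> [/s_adj // | /s_adj]; rewrite !sK.
Qed.

Lemma copy_set_aut s W : automorphism adj s -> copy_set W -> copy_set (fun v => W (s v)).
Proof.
move=> /[dup] [[_ s_adj]] /automorphism_inv [g _ [sg gs]].
move=> [F [F_adj [F_sym [f [f_inj fW fe]]]]].
exists (fun u v => F (s u) (s v)); split; [|split].
- by move=> u v /F_adj [uv Wu Wv]; split=> //; apply/s_adj.
- by move=> u v /F_sym.
- exists (fun x => g (f x)); split.
  + by move=> x y /(can_inj gs) /f_inj.
  + by move=> v; rewrite fW; split=> [[x fx]|[x <-]]; exists x; rewrite ?gs // fx sg.
  + by move=> x y; rewrite !gs.
Qed.

Lemma in_copy_aut s v : automorphism adj s ->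
  (exists2 W, copy_set W & W v) -> exists2 W, copy_set W & W (s v).
Proof.
move=> s_aut [W cW Wv]; have [g g_aut [sg _]] := automorphism_inv s_aut.
by exists (fun w => W (g w)); [apply: copy_set_aut | rewrite sg].
Qed.

End Copies.

(** * Hosts whose copies of K are disjoint blocks *)

Section Blocks.
Variables (T : finType) (e : rel T) (V : finType) (adj : V -> V -> Prop) (n : nat).
Variables (blk : 'I_n -> T -> V) (x0 : T).
Hypothesis e_sym : forall x y, e x y -> e y x.
Hypothesis blk_inj : forall i j x y, blk i x = blk j y -> i = j /\ x = y.
Hypothesis blk_adj : forall i x y, e x y -> adj (blk i x) (blk i y).
Hypothesis copy_blk : forall W, copy_set e adj W ->
  exists i, forall v, W v <-> exists x, blk i x = v.
Hypothesis blk_trans : forall i x y, exists2 s, automorphism adj s & s (blk i y) = blk i x.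

Lemma copy_set_blk i : copy_set e adj (fun v => exists x, blk i x = v).
Proof.
exists (fun u v => exists x y, [/\ blk i x = u, blk i y = v & e x y]); split; [|split].
- by move=> u v [x [y [<- <- exy]]]; split; [apply: blk_adj | exists x | exists y].
- by move=> u v [x [y [<- <- exy]]]; exists y, x; split; last exact: e_sym.
- exists (blk i); split=> // [x y /blk_inj [] //|x y].
  by split=> [exy | [x' [y' [/blk_inj [_ ->] /blk_inj [_ ->]]]]] //; exists x, y.
Qed.

Lemma in_copy_blk v : (exists2 W, copy_set e adj W & W v) <-> exists i x, blk i x = v.
Proof.
split=> [[W /copy_blk [i Wi] /Wi] | [i [x <-]]]; first by exists i.
by exists (fun v => exists x, blk i x = v); [apply: copy_set_blk | exists x].
Qed.

Definition blk_base : seq V := [seq blk i x0 | i <- enum 'I_n].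
Definition blk_all : seq V := [seq blk p.1 p.2 | p <- enum {: 'I_n * T}].

Lemma mem_blk_all v : v \in blk_all <-> exists i x, blk i x = v.
Proof.
split=> [/mapP [[i x] _ ->] | [i [x <-]]]; first by exists i, x.
by apply/mapP; exists (i, x); rewrite ?mem_enum.
Qed.

Lemma blk_base_represents : represents e adj blk_base.
Proof.
move=> W F cW; have [i Wi] := copy_blk (ex_intro _ F cW).
exists (blk i x0); split; first by apply/Wi; exists x0.
by apply/In_mem/mapP; exists i; rewrite ?mem_enum.
Qed.

Lemma represents_size_ge (X : seq V) : represents e adj X -> n <= size X.
Proof.
move=> X_rep.
have /fin_all_exists [g gX] : forall i, exists x, blk i x \in X.
  move=> i; have [F cF] := copy_set_blk i.
  by have [_ [[x <-] /In_mem]] := X_rep _ _ cF; exists x.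
rewrite -(size_enum_ord n) -(size_map (fun i => blk i (g i))).
apply: uniq_leq_size => [|_ /mapP [i _ ->] //].
by rewrite map_inj_uniq ?enum_uniq // => i j /blk_inj [].
Qed.

Lemma blk_all_uniq : uniq blk_all.
Proof. by rewrite map_inj_uniq ?enum_uniq // => -[i x] [j y] /blk_inj /= [-> ->]. Qed.

Lemma size_blk_all : size blk_all = #|T| * n.
Proof. by rewrite size_map -cardE card_prod card_ord mulnC. Qed.

Lemma blk_all_represents : represents e adj blk_all.
Proof.
move=> W F cW; have [i Wi] := copy_blk (ex_intro _ F cW).
exists (blk i x0); split; first by apply/Wi; exists x0.
by apply/In_mem/mem_blk_all; exists i, x0.
Qed.

Lemma blk_all_aut_invariant : aut_invariant adj blk_all.
Proof.
move=> s s_aut v; rewrite !In_mem !mem_blk_all -!in_copy_blk.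
split; first exact: in_copy_aut.
have [g g_aut [sg _]] := automorphism_inv s_aut.
by move=> /(in_copy_aut g_aut); rewrite sg.
Qed.

Lemma aut_invariant_size_ge (X : seq V) :
  represents e adj X -> aut_invariant adj X -> #|T| * n <= size X.
Proof.
move=> X_rep X_inv.
have blk_X i x : blk i x \in X.
  have [F cF] := copy_set_blk i; have [_ [[y <-] /In_mem yX]] := X_rep _ _ cF.
  have [s s_aut <-] := blk_trans i x y.
  by apply/In_mem; rewrite -(X_inv s s_aut); apply/In_mem.
rewrite -size_blk_all; apply: uniq_leq_size blk_all_uniq _.
by move=> _ /mapP [[i x] _ ->].
Qed.

Lemma upsilon_blocks : upsilon_v e adj n /\ upsilon_v_sym e adj (#|T| * n).
Proof.
split; split.
- exists blk_base; split; last exact: blk_base_represents.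
  + by apply/NoDup_uniq; rewrite map_inj_uniq ?enum_uniq // => i j /blk_inj [].
  + by rewrite length_size size_map size_enum_ord.
- by move=> m [X [_ <- X_rep]]; rewrite length_size; apply: represents_size_ge.
- exists blk_all; split; rewrite ?length_size ?size_blk_all //.
  + exact/NoDup_uniq/blk_all_uniq.
  + exact: blk_all_represents.
  + exact: blk_all_aut_invariant.
- move=> m [X [_ <- X_rep X_inv]].
  by rewrite length_size; apply: aut_invariant_size_ge.
Qed.

End Blocks.

Lemma connected_image_block (T : finType) (e : rel T) (I V : Type) (blk : I -> T -> V)
    (f : T -> V) (idx : T -> I) (pos : T -> T) (x0 : T) :
  (forall x y, clos_refl_trans T (fun a b => e a b) x y) -> injective f ->
  (forall x, f x = blk (idx x) (pos x)) -> (forall x y, e x y -> idx x = idx y) ->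
  forall v, (exists x, f x = v) <-> exists z, blk (idx x0) z = v.
Proof.
move=> e_conn f_inj f_blk e_idx.
have idx_x0 x : idx x = idx x0.
  by symmetry; apply: (clos_refl_trans_const e_idx) (e_conn x0 x).
have [pos' posK pos'K] : bijective pos.
  by apply: injF_bij => x y pxy; apply: f_inj; rewrite !f_blk !idx_x0 pxy.
move=> v; split=> [[x <-] | [z <-]]; first by exists (pos x); rewrite f_blk idx_x0.
by exists (pos' z); rewrite f_blk idx_x0 pos'K.
Qed.

Definition block_swap (n : nat) (T : finType) (i : 'I_n) (x y : T) (j : 'I_n) (z : T) : T :=
  if j == i then tperm x y z else z.

Lemma block_swapK n T i x y j : involutive (@block_swap n T i x y j).
Proof. by move=> z; rewrite /block_swap; case: eqP => // _; apply: tpermK. Qed.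

Lemma block_swap_inj n T i x y j : injective (@block_swap n T i x y j).
Proof. exact: inv_inj (block_swapK _ _ _ _). Qed.

Lemma block_swap_at n T i x y : @block_swap n T i x y i y = x.
Proof. by rewrite /block_swap eqxx tpermR. Qed.

Definition clique_union (n : nat) (T : Type) (u v : 'I_n * T) : Prop :=
  u.1 = v.1 /\ u.2 <> v.2.

Lemma clique_union_graph n T : is_graph (@clique_union n T).
Proof. by split=> [u v [uv1 uv2]|v [_ []]] //; split=> // vu; apply: uv2. Qed.

Lemma clique_union_upsilon (T : finType) (e : rel T) n :
  is_graph (fun x y : T => e x y) -> connected (fun x y : T => e x y) ->
  upsilon_v e (@clique_union n T) n /\ upsilon_v_sym e (@clique_union n T) (#|T| * n).
Proof.
move=> [e_sym e_irr] [[x0 _] e_conn].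
apply: (@upsilon_blocks _ _ _ _ _ (fun i x => (i, x)) x0) => //.
- by move=> i j x y [-> ->].
- by move=> i x y exy; split=> //= xy; apply: (e_irr x); rewrite {2}xy.
- move=> W [F [F_adj [_ [f [f_inj fW fe]]]]]; exists (f x0).1 => v; rewrite fW.
  apply: (@connected_image_block T e _ _ (fun i x => (i, x)) f
            (fun x => (f x).1) (fun x => (f x).2)) => // [x | x y /fe /F_adj [[]] //].
  by case: (f x).
- move=> i x y; exists (fun u => (u.1, block_swap i x y u.1 u.2)); last first.
    by rewrite /= block_swap_at.
  apply: involutive_automorphism => [[j z] | [j z] [j' z'] [/= <- zz']].
    by rewrite /= block_swapK.
  by split=> // /block_swap_inj.
Qed.

Definition complete (V : Type) (u v : V) : Prop := u <> v.

Lemma complete_graph V : is_graph (@complete V).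
Proof. by split=> [u v uv vu | v []]; last by []; apply: uv. Qed.

Lemma complete_connected (V : Type) (v : V) : connected (@complete V).
Proof.
split=> [|x y]; first by exists v.
by have [->|xy] := lem (x = y); [apply: rt_refl | apply: rt_step].
Qed.

Lemma complete_upsilon (T : finType) (e : rel T) n (x0 : T) :
  is_graph (fun x y : T => e x y) -> (forall x y : T, x = y) ->
  upsilon_v e (@complete ('I_n * T)) n /\ upsilon_v_sym e (@complete ('I_n * T)) (#|T| * n).
Proof.
move=> [e_sym e_irr] T1.
have no_edge x y : ~ e x y by rewrite (T1 x y); apply: e_irr.
apply: (@upsilon_blocks _ _ _ _ _ (fun i x => (i, x)) x0) => //.
- by move=> i j x y [-> ->].
- by move=> i x y /no_edge.
- move=> W [F [_ [_ [f [f_inj fW _]]]]]; exists (f x0).1 => v; rewrite fW.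
  apply: (@connected_image_block T e _ _ (fun i x => (i, x)) f
            (fun x => (f x).1) (fun x => (f x).2)) => // [x y | x | x y /no_edge //].
  + by rewrite (T1 x y); apply: rt_refl.
  + by case: (f x).
- move=> i x y; exists id; last by rewrite (T1 x y).
  by apply: involutive_automorphism.
Qed.

(* Some (i, z, q) lies at height q above the vertex z of the i-th clique, which
   has height 0; the vertices of height h are joined to the hub None. *)
Section HubGraph.
Variables (T : finType) (n h : nat).
Local Notation V := (option ('I_n * T * 'I_h.+1)).

Definition hub_adj (u v : V) : Prop :=
  match u, v with
  | None, None => False
  | None, Some (_, _, q) | Some (_, _, q), None => val q = h
  | Some (i, z, q), Some (i', z', q') => i = i' /\
      (val q = 0 /\ val q' = 0 /\ z <> z' \/
       z = z' /\ ((val q).+1 = val q' \/ (val q').+1 = val q))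
  end.

Lemma hub_adj_graph : is_graph hub_adj.
Proof.
split=> [[[[i z] q]|] [[[i' z'] q']|] //= | [[[i z] q]|] //=].
- case=> -> [[q0 [q0' zz']] | [-> qq']]; split=> //; last by right; split=> //; lia.
  by left; do 2!split=> //; move=> z'z; apply: zz'.
- by case=> _ [[_ [_ []]] | [_]] //; lia.
Qed.

Definition spoke (i : 'I_n) (z : T) (q : nat) : V := Some (i, z, inord q).

Lemma hub_connected : connected hub_adj.
Proof.
have to_hub u : clos_refl_trans V hub_adj u None.
  case: u => [[[i z] q]|]; last exact: rt_refl.
  have climb d q' : q' + d = h -> clos_refl_trans V hub_adj (spoke i z q') None.
    elim: d q' => [|d IH] q' hq; first by apply: rt_step; rewrite /= inordK; lia.
    apply: rt_trans (IH q'.+1 _); last by lia.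
    by apply: rt_step; rewrite /= !inordK; try lia; split=> //; right; split=> //; left.
  by rewrite -[q]inord_val; apply: (climb (h - q)); have := ltn_ord q; lia.
split=> [|u v]; first by exists None.
apply: rt_trans (to_hub u) (clos_refl_trans_sym _ (to_hub v)).
by case: hub_adj_graph.
Qed.

Lemma spoke_nbrs i z q w : 0 < q <= h -> hub_adj (spoke i z q) w ->
  w = spoke i z q.-1 \/ w = (if q == h then None else spoke i z q.+1).
Proof.
move=> /andP [q0 qh]; case: w => [[[i' z'] q']|] /=; rewrite inordK ?ltnS //; last first.
  by move=> ->; right; rewrite eqxx.
move=> [<- [[q0' _] | [<- q'q]]]; first by lia.
have q'h := ltn_ord q'.
case: q'q => [qq' | q'q]; [right | left]; rewrite /spoke.
- have -> : (q == h) = false by apply/eqP; lia.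
  by congr (Some (_, _, _)); apply: val_inj; rewrite /= inordK //; lia.
- by congr (Some (_, _, _)); apply: val_inj; rewrite /= inordK //; lia.
Qed.

Definition hub_swap (i : 'I_n) (x y : T) : V -> V :=
  omap (fun p => (p.1.1, block_swap i x y p.1.1 p.1.2, p.2)).

Lemma hub_swap_aut i x y : automorphism hub_adj (hub_swap i x y).
Proof.
apply: involutive_automorphism => [[[[j z] q]|] //= | ]; first by rewrite block_swapK.
move=> [[[j z] q]|] [[[j' z'] q']|] //= [<- [[q0 [q0' zz']] | [<- qq']]]; split=> //.
- by left; do 2!split=> //; move/block_swap_inj.
- by right.
Qed.

Section HubCopies.
Variable e : rel T.
Hypothesis e_deg : forall x, 1 < degree e x.
Hypothesis h_big : #|T| < h.
Variables (W : V -> Prop) (F : V -> V -> Prop) (f : T -> V).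
Hypothesis F_adj : forall u v, F u v -> [/\ hub_adj u v, W u & W v].
Hypothesis f_inj : injective f.
Hypothesis fe : forall x y, e x y <-> F (f x) (f y).

Local Notation img := [set f x | x in T].

Lemma hub_adj_img x y : e x y -> hub_adj (f x) (f y).
Proof. by move=> /fe /F_adj []. Qed.

Lemma img_nbrs u a b : u \in img ->
  (forall w, hub_adj u w -> w = a \/ w = b) -> a \in img /\ b \in img.
Proof.
move=> /imsetP [x _ ->] nbrs.
have /card_gt1P [y1 [y2 [+ + y12]]] := e_deg x; rewrite !inE => e1 e2.
have img_f y : f y \in img by apply: imset_f.
have fy12 : f y1 != f y2 by rewrite (inj_eq f_inj).
have [h1|h1] := nbrs _ (hub_adj_img e1); have [h2|h2] := nbrs _ (hub_adj_img e2);
  rewrite -?h1 -?h2 ?img_f //; by move: fy12; rewrite h1 h2 eqxx.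
Qed.

(* Spoke vertices have two neighbours, and a vertex of a copy has at least two
   neighbours inside the copy. *)
Lemma spoke_img_step i z q : 0 < q < h -> (spoke i z q \in img) = (spoke i z q.+1 \in img).
Proof.
move=> /andP [q0 qh]; apply/idP/idP => qI.
- have qh' : 0 < q <= h by rewrite q0 ltnW.
  have [_] := img_nbrs qI (fun w => @spoke_nbrs i z q w qh').
  by have -> : (q == h) = false by apply/eqP; lia.
- have qh' : 0 < q.+1 <= h by [].
  by have [] := img_nbrs qI (fun w => @spoke_nbrs i z q.+1 w qh').
Qed.

Lemma spoke_notin_img i z q : 0 < q <= h -> spoke i z q \notin img.
Proof.
move=> hq; apply/negP => qI.
have all_in r : 0 < r <= h -> spoke i z r \in img.
  move=> hr; have step := spoke_img_step i z.
  by rewrite (nat_interval_const step hr) -(nat_interval_const step hq).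
have : h <= #|img|.
  rewrite -{1}(size_iota 1 h) -(size_map (spoke i z)) cardE; apply: uniq_leq_size.
  - rewrite map_inj_in_uniq ?iota_uniq // => r r'; rewrite !mem_iota => hr hr'.
    by case=> /(congr1 val) /=; rewrite !inordK; lia.
  - by move=> w /mapP [r]; rewrite mem_iota => hr ->; rewrite mem_enum; apply: all_in; lia.
by rewrite card_imset // leqNgt h_big.
Qed.

Lemma img_height0 x i z q : f x = Some (i, z, q) -> val q = 0.
Proof.
move=> fx; apply/eqP; rewrite -leqn0 leqNgt; apply/negP => q0.
have hq : 0 < q <= h by rewrite q0 -ltnS ltn_ord.
by move: (spoke_notin_img i z hq); rewrite /spoke inord_val -fx imset_f.
Qed.

Lemma img_not_hub x : f x <> None.
Proof.
move=> fx; have /card_gt0P [y] : 0 < degree e x by apply: ltnW.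
rewrite inE => /hub_adj_img; rewrite fx; case fy : (f y) => [[[i z] q]|] //= qh.
by move: h_big; rewrite -qh (img_height0 fy).
Qed.

Lemma img_base x : exists p : 'I_n * T, f x = Some (p.1, p.2, ord0).
Proof.
case fx : (f x) => [[[i z] q]|]; last by case: (img_not_hub fx).
by exists (i, z); congr (Some (_, _, _)); apply: val_inj; apply: img_height0 fx.
Qed.

End HubCopies.

Lemma hub_upsilon (e : rel T) (x0 : T) :
  is_graph (fun x y : T => e x y) -> connected (fun x y : T => e x y) ->
  (forall x, 1 < degree e x) -> #|T| < h ->
  upsilon_v e hub_adj n /\ upsilon_v_sym e hub_adj (#|T| * n).
Proof.
move=> [e_sym e_irr] [_ e_conn] e_deg h_big.
apply: (@upsilon_blocks _ _ _ _ _ (fun i x => Some (i, x, ord0)) x0) => //.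
- by move=> i j x y [-> ->].
- move=> i x y exy /=; split=> //; left; do 2!split=> //.
  by move=> xy; apply: (e_irr x); rewrite {2}xy.
- move=> W [F [F_adj [_ [f [f_inj fW fe]]]]].
  have /choice [p fp] := img_base e_deg h_big F_adj f_inj fe.
  exists (p x0).1 => v; rewrite fW.
  apply: (@connected_image_block T e _ _ (fun i z => Some (i, z, ord0)) f
            (fun x => (p x).1) (fun x => (p x).2)) => // x y exy.
  by move: (hub_adj_img F_adj fe exy); rewrite !fp => -[].
- move=> i x y; exists (hub_swap i x y); first exact: hub_swap_aut.
  by rewrite /= block_swap_at.
Qed.

End HubGraph.

(** * Symmetric representing sets *)

Lemma card_set_sum (I : finType) (A : {pred I}) (p : pred I) :
  #|[set x in A | p x]| = \sum_(x in A) p x.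
Proof.
rewrite -sum1_card big_mkcond [RHS]big_mkcond /=; apply: eq_bigr => x _.
by rewrite inE; case: (x \in A); case: (p x).
Qed.

Section Transversals.
Variable U : choiceType.
Implicit Types (P : (U -> Prop) -> Prop) (S : seq U).

Definition transversal P S : Prop := forall W, P W -> exists2 v, W v & v \in S.

Lemma transversal_cons P v S :
  transversal (fun W => P W /\ ~ W v) S -> transversal P (v :: S).
Proof.
move=> tS W PW; have [Wv|nWv] := lem (W v); first by exists v; rewrite ?mem_head.
by have [w Ww wS] := tS W (conj PW nWv); exists w; rewrite // in_cons wS orbT.
Qed.

(* The host graph may be infinite, but the minimum transversals still live in a
   finite set.  By induction on n: a transversal of size <= n.+1 meets a fixed
   member W0 in one of its finitely many points w, and the rest of it is a
   transversal of size <= n of the members avoiding w. *)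
Lemma small_transversals_finite n P :
  (forall W, P W -> exists l : seq U, forall v, W v -> v \in l) ->
  (forall S, transversal P S -> n <= size S) ->
  exists Uf : seq U, forall S, transversal P S -> size S <= n -> {subset S <= Uf}.
Proof.
elim: n P => [|n IH] P P_fin P_min; first by exists [::] => -[|? ?].
have [W0 PW0] : exists W0, P W0.
  apply: contrapT => noP.
  by have /P_min : transversal P [::] by move=> W PW; case: noP; exists W.
have [l0 W0_l0] := P_fin _ PW0.
have /choice [Uw Uw_cover] : forall w, exists Uf : seq U, forall S,
    transversal (fun W => P W /\ ~ W w) S -> size S <= n -> {subset S <= Uf}.
  by move=> w; apply: IH => [W [/P_fin] | S /transversal_cons /P_min].
exists (l0 ++ flatten [seq Uw w | w <- l0]) => S tS szS x xS.
have [w W0w wS] := tS _ PW0.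
rewrite mem_cat; have [->|xw] := eqVneq x w; first by rewrite W0_l0.
apply/orP; right; apply/flatten_mapP; exists w; first exact: W0_l0.
apply: (Uw_cover w [seq y <- S | y != w]); last by rewrite mem_filter xw.
- move=> W [PW nWw]; have [y Wy yS] := tS W PW; exists y => //.
  by rewrite mem_filter yS andbT; apply/eqP => yw; apply: nWw; rewrite -yw.
- rewrite size_filter -ltnS (leq_trans _ szS) //.
  rewrite -[X in _ < X](count_predC (fun y => y != w) S) -addn1 leq_add2l.
  by rewrite -has_count; apply/hasP; exists w => //=; rewrite negbK.
Qed.

Section Symmetrization.
Variables (P : (U -> Prop) -> Prop) (k t : nat) (X0 Uf : seq U).
Hypothesis P_small :
  forall W, P W -> exists2 l : seq U, size l <= k & forall v, W v -> v \in l.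
Hypothesis t_min : forall S, transversal P S -> t <= size S.
Hypothesis X0_tr : transversal P X0.
Hypothesis X0_size : size X0 = t.
Hypothesis Uf_cover : forall S, transversal P S -> size S <= t -> {subset S <= Uf}.

Definition in_min_transversal v : Prop :=
  exists S, [/\ transversal P S, size S = t & v \in S].

Definition min_support : seq U := [seq v <- Uf | `[< in_min_transversal v >]].

Lemma mem_min_support v : v \in min_support <-> in_min_transversal v.
Proof.
rewrite mem_filter; split=> [/andP [/asboolP] //|vmin].
apply/andP; split; first exact/asboolP.
by case: vmin => S [tS szS vS]; apply: (Uf_cover tS) => //; rewrite szS.
Qed.

Local Notation D := (seq_sub min_support).

Definition min_transversals : {set {set D}} :=
  [set A : {set D} | `[< transversal P (map val (enum A)) >] && (#|A| <= t)].

Lemma card_min_transversal A : A \in min_transversals -> #|A| = t.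
Proof.
rewrite inE => /andP [/asboolP tA At]; apply/eqP; rewrite eqn_leq At.
by have := t_min tA; rewrite size_map -cardE.
Qed.

Lemma min_transversals_gt0 : 0 < #|min_transversals|.
Proof.
apply/card_gt0P; exists [set d : D | val d \in X0]; rewrite inE; apply/andP; split.
- apply/asboolP => W PW; have [v Wv vX0] := X0_tr PW.
  have vD : v \in min_support by apply/mem_min_support; exists X0.
  by exists v => //; apply/mapP; exists (SeqSub vD); rewrite // mem_enum inE.
- rewrite cardE -X0_size -(size_map val); apply: uniq_leq_size.
  + by rewrite map_inj_uniq ?enum_uniq //; apply: val_inj.
  + by move=> v /mapP [d]; rewrite mem_enum inE => dX0 ->.
Qed.

Definition freq (d : D) : nat := #|[set A in min_transversals | d \in A]|.

Lemma sum_freq : \sum_d freq d = t * #|min_transversals|.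
Proof.
rewrite /freq; under eq_bigr => d _ do rewrite card_set_sum.
rewrite exchange_big /= mulnC -sum_nat_const; apply: eq_bigr => A A_min.
rewrite -(card_min_transversal A_min) -sum1_card [RHS]big_mkcond /=.
by apply: eq_bigr => d _; case: (d \in A).
Qed.

Definition hit (W : U -> Prop) : {set D} := [set d | `[< W (val d) >]].

Lemma card_hit W : P W -> #|hit W| <= k.
Proof.
move=> /P_small [l lk Wl]; apply: leq_trans lk.
rewrite cardE -(size_map val); apply: uniq_leq_size.
- by rewrite map_inj_uniq ?enum_uniq //; apply: val_inj.
- by move=> v /mapP [d]; rewrite mem_enum inE => /asboolP Wd ->; apply: Wl.
Qed.

Lemma freq_hit W : P W -> #|min_transversals| <= \sum_(d in hit W) freq d.
Proof.
move=> PW; rewrite /freq; under eq_bigr do rewrite card_set_sum.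
rewrite exchange_big /= -sum1_card; apply: leq_sum => A.
rewrite inE => /andP [/asboolP tA _].
have [v Wv /mapP [d]] := tA W PW; rewrite mem_enum => dA vd.
by rewrite (bigD1 d) ?dA // inE; apply/asboolP; rewrite -vd.
Qed.

Definition frequent_set : {set D} := [set d | #|min_transversals| <= k * freq d].

Definition frequent : seq U := map val (enum frequent_set).

Lemma frequent_uniq : uniq frequent.
Proof. by rewrite map_inj_uniq ?enum_uniq //; apply: val_inj. Qed.

Lemma frequent_size : size frequent <= k * t.
Proof.
rewrite size_map -cardE -(leq_pmul2r min_transversals_gt0) -mulnA -sum_freq.
rewrite big_distrr /= -sum_nat_const (@leq_trans (\sum_(d in frequent_set) k * freq d)) //.
  by apply: leq_sum => d; rewrite inE.
by rewrite big_mkcond /=; apply: leq_sum => d _; case: (d \in frequent_set).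
Qed.

Lemma frequent_transversal : transversal P frequent.
Proof.
move=> W PW.
have [d /andP [dW dY] | none] := pickP [pred d | (d \in hit W) && (d \in frequent_set)].
  by exists (val d); [move: dW; rewrite inE => /asboolP | apply: map_f; rewrite mem_enum].
have rare d : d \in hit W -> k * freq d < #|min_transversals|.
  by move=> dW; move: (none d); rewrite /= dW inE ltnNge /= => ->.
have upper : \sum_(d in hit W) (k * freq d + 1) <= k * #|min_transversals|.
  apply: leq_trans (_ : #|hit W| * #|min_transversals| <= _); last first.
    by rewrite leq_mul2r card_hit ?orbT.
  by rewrite -sum_nat_const; apply: leq_sum => d /rare; rewrite addn1.
have lower : k * #|min_transversals| <= \sum_(d in hit W) k * freq d.
  by rewrite -big_distrr leq_mul2l freq_hit ?orbT.
move: (leq_trans upper lower); rewrite big_split sum1_card /=.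
rewrite -[X in _ <= X]addn0 leq_add2l leqn0 => /eqP /card0_eq hit0.
by move: (freq_hit PW); rewrite big_pred0 // leqNgt min_transversals_gt0.
Qed.

Section Stable.
Variable s : U -> U.
Hypothesis s_inj : injective s.
Hypothesis P_s : forall W, P W -> P (fun v => W (s v)).

Lemma transversal_map S : transversal P S -> transversal P (map s S).
Proof. by move=> tS W /P_s /tS [v Wsv vS]; exists (s v); rewrite ?map_f. Qed.

Lemma min_support_map (d : D) : s (val d) \in min_support.
Proof.
have /mem_min_support [S [tS szS dS]] := ssvalP d.
apply/mem_min_support; exists (map s S).
by split; [apply: transversal_map | rewrite size_map | apply: map_f].
Qed.

Definition shift (d : D) : D := SeqSub (min_support_map d).

Lemma shift_inj : injective shift.
Proof. by move=> d1 d2 /(congr1 val) /s_inj /val_inj. Qed.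

Lemma min_transversals_shift A : A \in min_transversals -> shift @: A \in min_transversals.
Proof.
rewrite !inE => /andP [/asboolP tA At]; apply/andP; split; last first.
  by rewrite card_imset //; apply: shift_inj.
apply/asboolP => W /P_s /tA [v Wsv /mapP [d]]; rewrite mem_enum => dA vd.
exists (s v) => //; apply/mapP; exists (shift d); last by rewrite vd.
by rewrite mem_enum imset_f.
Qed.

Lemma freq_shift d : freq d <= freq (shift d).
Proof.
rewrite /freq -(card_imset _ (imset_inj shift_inj)); apply: subset_leq_card.
apply/subsetP => B /imsetP [A]; rewrite inE => /andP [A_min dA] ->.
by rewrite inE min_transversals_shift //= imset_f.
Qed.

Lemma frequent_stable : {homo s : v / v \in frequent}.
Proof.
move=> v /mapP [d]; rewrite mem_enum inE => dY ->.
apply/mapP; exists (shift d) => //; rewrite mem_enum inE.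
by apply: leq_trans dY _; rewrite leq_mul2l freq_shift orbT.
Qed.

End Stable.
End Symmetrization.

Lemma symmetric_transversal P k S0 :
  (forall W, P W -> exists2 l : seq U, size l <= k & forall v, W v -> v \in l) ->
  transversal P S0 ->
  exists Y : seq U, [/\ uniq Y, transversal P Y, size Y <= k * size S0 &
    forall s, injective s -> (forall W, P W -> P (fun v => W (s v))) ->
    {homo s : v / v \in Y}].
Proof.
move=> P_small tS0.
pose has_tr m := `[< exists S, transversal P S /\ size S = m >].
have ex_tr : exists m, has_tr m by exists (size S0); apply/asboolP; exists S0.
case: (ex_minnP ex_tr) => t /asboolP [X0 [X0_tr X0_size]] t_min'.
have t_min S : transversal P S -> t <= size S.
  by move=> tS; apply: t_min'; apply/asboolP; exists S.
have P_fin W : P W -> exists l : seq U, forall v, W v -> v \in l.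
  by move=> /P_small [l _ Wl]; exists l.
have [Uf Uf_cover] := small_transversals_finite P_fin t_min.
exists (frequent P k t Uf); split.
- exact: frequent_uniq.
- exact: frequent_transversal X0_tr X0_size Uf_cover.
- apply: leq_trans (frequent_size k t_min X0_tr X0_size Uf_cover) _.
  by rewrite leq_mul2l t_min ?orbT.
- by move=> s s_inj P_s; apply: frequent_stable.
Qed.

End Transversals.

Lemma representsP (T : finType) (e : rel T) (V : Type) (adj : V -> V -> Prop)
    (X : seq {classic V}) :
  represents e adj X <-> @transversal {classic V} (copy_set e adj) X.
Proof.
split=> [X_rep W [F cF] | X_tr W F cF].
- by have [v [Wv vX]] := X_rep W F cF; exists v => //; apply/In_mem.
- have [v Wv vX] := X_tr W (ex_intro _ F cF).
  by exists v; split=> //; apply/(In_mem (T := {classic V})).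
Qed.

Lemma symmetric_represents (T : finType) (e : rel T) (V : Type) (adj : V -> V -> Prop)
    (X : seq V) :
  represents e adj X -> exists Y : seq V,
    [/\ List.NoDup Y, represents e adj Y, aut_invariant adj Y & size Y <= #|T| * size X].
Proof.
move=> X_rep.
have copy_small W : copy_set e adj W ->
    exists2 l : seq {classic V}, size l <= #|T| & forall v, W v -> v \in l.
  move=> [F [_ [_ [f [_ fW _]]]]]; exists (map f (enum T)); first by rewrite size_map -cardE.
  by move=> v /fW [x <-]; apply: map_f; rewrite mem_enum.
have [Y [Y_uniq Y_tr Y_size Y_stable]] :=
  @symmetric_transversal {classic V} _ _ X copy_small (proj1 (representsP e adj X) X_rep).
have aut_stable s : automorphism adj s -> {homo s : v / v \in Y}.
  by move=> s_aut; apply: Y_stable (automorphism_inj s_aut) (fun W => copy_set_aut s_aut).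
exists Y; split=> //; first exact/(NoDup_uniq (T := {classic V})).
- exact/representsP.
- move=> s s_aut v; have [g g_aut [sg _]] := automorphism_inv s_aut.
  rewrite !(In_mem (T := {classic V})); split=> [/(aut_stable s s_aut) //|].
  by move=> /(aut_stable g g_aut); rewrite sg.
Qed.

(** * Disconnected patterns *)

Section Induced.
Variables (T : finType) (e : rel T) (V : Type) (adj : V -> V -> Prop).
Hypothesis e_sym : forall x y, e x y -> e y x.

Definition induced (C : pred T) : rel {x : T | C x} := fun a b => e (val a) (val b).
Arguments induced : clear implicits.

Lemma copy_set_induced (C : pred T) W : copy_set e adj W ->
  exists2 W', copy_set (induced C) adj W' & forall v, W' v -> W v.
Proof.
move=> [F [F_adj [_ [f [f_inj fW fe]]]]].
exists (fun v => exists a : {x | C x}, f (val a) = v); last first.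
  by move=> v [a <-]; apply/fW; exists (val a).
exists (fun u v => exists a b : {x | C x},
  [/\ f (val a) = u, f (val b) = v & e (val a) (val b)]).
split; [|split].
- move=> u v [a [b [<- <- eab]]]; split; [|by exists a|by exists b].
  by case: (F_adj _ _ (proj1 (fe _ _) eab)).
- by move=> u v [a [b [<- <- eab]]]; exists b, a; split=> //; apply: e_sym.
- exists (fun a => f (val a)); split=> // [a b /f_inj /val_inj // | a b].
  by split=> [eab | [a' [b' [/f_inj /val_inj -> /f_inj /val_inj -> //]]]]; exists a, b.
Qed.

Lemma represents_induced (C : pred T) (Y : seq V) :
  represents (induced C) adj Y -> represents e adj Y.
Proof.
move=> Y_rep W F cWF; have [W' [F' cW'] W'W] := copy_set_induced C (ex_intro _ F cWF).
by have [v [W'v vY]] := Y_rep _ _ cW'; exists v; split=> //; apply: W'W.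
Qed.

Variable C : pred T.
Hypothesis C_closed : forall x y, e x y -> C x = C y.
Local Notation K1 := {x : T | C x}.
Local Notation K2 := {x : T | ~~ C x}.

Lemma sideP x : (exists a : K1, val a = x) \/ (exists b : K2, val b = x).
Proof.
have [Cx|nCx] := boolP (C x); first by left; exists (exist _ x Cx).
by right; exists (exist _ x nCx).
Qed.

Section Glue.
Variables (W1 W2 : V -> Prop) (F1 F2 : V -> V -> Prop) (f1 : K1 -> V) (f2 : K2 -> V).
Hypothesis F1_adj : forall u v, F1 u v -> [/\ adj u v, W1 u & W1 v].
Hypothesis F2_adj : forall u v, F2 u v -> [/\ adj u v, W2 u & W2 v].
Hypothesis F1_sym : forall u v, F1 u v -> F1 v u.
Hypothesis F2_sym : forall u v, F2 u v -> F2 v u.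
Hypothesis f1_inj : injective f1.
Hypothesis f2_inj : injective f2.
Hypothesis f1W : forall v, W1 v <-> exists a, f1 a = v.
Hypothesis f2W : forall v, W2 v <-> exists b, f2 b = v.
Hypothesis f1e : forall a b, induced C a b <-> F1 (f1 a) (f1 b).
Hypothesis f2e : forall a b, induced (fun x => ~~ C x) a b <-> F2 (f2 a) (f2 b).
Hypothesis W12 : forall v, W1 v -> W2 v -> False.

Definition glue (x : T) : V :=
  match boolP (C x) with
  | AltTrue Cx => f1 (exist _ x Cx)
  | AltFalse nCx => f2 (exist _ x nCx)
  end.

Lemma glue_in (a : K1) : glue (val a) = f1 a.
Proof.
rewrite /glue; destruct (boolP (C (val a))) as [Ca | nCa]; first by congr f1; apply: val_inj.
by case/negP: (nCa); apply: valP.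
Qed.

Lemma glue_out (b : K2) : glue (val b) = f2 b.
Proof.
rewrite /glue; destruct (boolP (C (val b))) as [Cb | nCb]; last by congr f2; apply: val_inj.
by case/negP: (valP b).
Qed.

Lemma W1_f1 a : W1 (f1 a). Proof. by apply/f1W; exists a. Qed.
Lemma W2_f2 b : W2 (f2 b). Proof. by apply/f2W; exists b. Qed.

Lemma glue_inj : injective glue.
Proof.
move=> x y; case: (sideP x) => [[a <-]|[b <-]]; case: (sideP y) => [[a' <-]|[b' <-]];
  rewrite ?glue_in ?glue_out.
- by move/f1_inj ->.
- by move=> fab; case: (W12 (W1_f1 a)); rewrite fab; apply: W2_f2.
- by move=> fab; case: (W12 (W1_f1 a')); rewrite -fab; apply: W2_f2.
- by move/f2_inj ->.
Qed.

Lemma glue_image v : W1 v \/ W2 v <-> exists x, glue x = v.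
Proof.
split=> [[/f1W [a <-] | /f2W [b <-]] | [x <-]].
- by exists (val a); rewrite glue_in.
- by exists (val b); rewrite glue_out.
- case: (sideP x) => [[a <-]|[b <-]]; rewrite ?glue_in ?glue_out.
  + by left; apply: W1_f1.
  + by right; apply: W2_f2.
Qed.

Lemma glue_edges x y : e x y <-> F1 (glue x) (glue y) \/ F2 (glue x) (glue y).
Proof.
case: (sideP x) => [[a <-]|[b <-]]; case: (sideP y) => [[a' <-]|[b' <-]];
  rewrite ?glue_in ?glue_out.
- rewrite (f1e a a'); split=> [|[//|/F2_adj [_ W2a _]]]; first by left.
  by case: (W12 (W1_f1 a) W2a).
- split=> [/C_closed | [/F1_adj [_ _ W1b] | /F2_adj [_ W2a _]]].
  + by rewrite (valP a) (negbTE (valP b')).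
  + by case: (W12 W1b (W2_f2 b')).
  + by case: (W12 (W1_f1 a) W2a).
- split=> [/C_closed | [/F1_adj [_ W1b _] | /F2_adj [_ _ W2a]]].
  + by rewrite (valP a') (negbTE (valP b)).
  + by case: (W12 W1b (W2_f2 b)).
  + by case: (W12 (W1_f1 a') W2a).
- rewrite (f2e b b'); split=> [|[/F1_adj [_ W1b _]|//]]; first by right.
  by case: (W12 W1b (W2_f2 b)).
Qed.

Lemma glue_copy : iso_subgraph e adj (fun v => W1 v \/ W2 v) (fun u v => F1 u v \/ F2 u v).
Proof.
split; [|split].
- by move=> u v [/F1_adj [? ? ?] | /F2_adj [? ? ?]]; split; by [left | right |].
- by move=> u v [/F1_sym | /F2_sym]; [left | right].
- by exists glue; split; [apply: glue_inj | move=> v; apply: glue_image | apply: glue_edges].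
Qed.

End Glue.

(* If a copy W2 of the part outside C misses X, a copy of the part inside C
   avoiding W2 glues with W2 into a copy of K, which X meets inside C. *)
Lemma represents_split (X : seq {classic V}) : represents e adj X ->
  represents (induced (fun x => ~~ C x)) adj X \/
  exists2 X' : seq V, represents (induced C) adj X' & size X' <= size X + #|{: K2}|.
Proof.
move=> X_rep.
have [|[W2 [F2 [I2 W2X]]]] : represents (induced (fun x => ~~ C x)) adj X \/
    exists W2 F2, iso_subgraph (induced (fun x => ~~ C x)) adj W2 F2 /\
                  forall v, W2 v -> ~ List.In v X.
- have [|nrep] := lem (represents (induced (fun x => ~~ C x)) adj X); first by left.
  right; apply: contrapT => none; apply: nrep => W F cWF.
  apply: contrapT => nhit; apply: none; exists W, F; split=> // v Wv Xv.
  by apply: nhit; exists v.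
- by left.
right; have [F2_adj [F2_sym [f2 [f2_inj f2W f2e]]]] := I2.
exists (X ++ map f2 (enum {: K2})); last by rewrite size_cat size_map -cardE.
move=> W1 F1 [F1_adj [F1_sym [f1 [f1_inj f1W f1e]]]].
have [[w [W1w W2w]] | disj] := lem (exists w, W1 w /\ W2 w).
  exists w; split=> //; apply/(In_mem (T := {classic V})); rewrite mem_cat; apply/orP; right.
  by have [b <-] := proj1 (f2W w) W2w; apply: map_f; rewrite mem_enum.
have W12 v : W1 v -> W2 v -> False by move=> W1v W2v; apply: disj; exists v.
have [v [[W1v|W2v] Xv]] := X_rep _ _ (glue_copy F1_adj F2_adj F1_sym F2_sym f1_inj f2_inj
                                        f1W f2W f1e f2e W12); last by case: (W2X v W2v Xv).
exists v; split=> //; apply/(In_mem (T := {classic V})); rewrite mem_cat.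
by move/(In_mem (T := {classic V})): Xv => ->.
Qed.

End Induced.

Lemma card_sig_predC (T : finType) (C : pred T) :
  #|{: {x : T | C x}}| + #|{: {x : T | ~~ C x}}| = #|T|.
Proof. by rewrite !card_sig -(cardC [pred x | C x]). Qed.

Lemma disconnected_cut (T : finType) (e : rel T) :
  (forall x y, e x y -> e y x) -> ~ connected (fun x y : T => e x y) -> 0 < #|T| ->
  exists C : pred T, [/\ forall x y, e x y -> C x = C y,
    0 < #|{: {x : T | C x}}| & 0 < #|{: {x : T | ~~ C x}}|].
Proof.
move=> e_sym disc /card_gt0P [x0 _].
have [u [v nuv]] : exists u v, ~ clos_refl_trans T (fun a b => e a b) u v.
  apply: contrapT => all_conn; apply: disc; split=> [|u v]; first by exists x0.
  by apply: contrapT => nuv; apply: all_conn; exists u, v.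
exists (connect e u); split; rewrite ?card_sig.
- move=> x y exy; apply/idP/idP => [ux | uy].
  + exact: connect_trans ux (connect1 exy).
  + exact: connect_trans uy (connect1 (e_sym _ _ exy)).
- by apply/card_gt0P; exists u; rewrite inE connect0.
- by apply/card_gt0P; exists v; rewrite inE; apply/negP => /connect_clos_refl_trans.
Qed.

Lemma aut_invariant_represents_split (T : finType) (e : rel T) (V : Type)
    (adj : V -> V -> Prop) (C : pred T) n :
  (forall x y, e x y -> e y x) -> (forall x y, e x y -> C x = C y) -> has_rep e adj n ->
  exists Y : seq V, [/\ List.NoDup Y, represents e adj Y, aut_invariant adj Y &
    size Y <= #|{: {x : T | ~~ C x}}| * n \/
    size Y <= #|{: {x : T | C x}}| * (n + #|{: {x : T | ~~ C x}}|)].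
Proof.
move=> e_sym C_closed [X [_ <- X_rep]]; rewrite length_size.
have [X2_rep | [X1 X1_rep X1_size]] := represents_split C_closed X_rep.
  have [Y [Y_nd Y_rep Y_inv Y_size]] := symmetric_represents X2_rep.
  by exists Y; split=> //; [apply: represents_induced Y_rep | left].
have [Y [Y_nd Y_rep Y_inv Y_size]] := symmetric_represents X1_rep.
exists Y; split=> //; first exact: represents_induced Y_rep.
by right; apply: leq_trans Y_size _; rewrite leq_mul2l X1_size orbT.
Qed.

Lemma costly_connected (T : finType) (e : rel T) :
  is_graph (fun x y : T => e x y) -> vertex_costly e -> connected (fun x y : T => e x y).
Proof.
move=> [e_sym _] costly; apply: contrapT => disc.
have T_gt0 : 0 < #|T|.
  by have [V [adj [n [_ _ _ _]]]] := costly 1; rewrite muln_gt0 => /andP [].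
have [C [C_closed k1_gt0 k2_gt0]] := disconnected_cut e_sym disc T_gt0.
have [V [adj [n [_ _ [n_rep _] [_ n_min] n_big]]]] := costly (#|T| * #|T|.+1).
have [Y [Y_nd Y_rep Y_inv Y_size]] := aut_invariant_represents_split e_sym C_closed n_rep.
have : #|T| * n <= size Y by rewrite -length_size; apply: n_min; exists Y.
move: n_big Y_size; rewrite -(card_sig_predC C) leq_pmul2l ?addn_gt0 ?k1_gt0 //.
by move: (#|{: {x | C x}}|) (#|{: {x | ~~ C x}}|) k1_gt0 k2_gt0 => k1 k2; nia.
Qed.

Lemma connected_costly (T : finType) (e : rel T) :
  is_graph (fun x y : T => e x y) -> connected (fun x y : T => e x y) -> vertex_costly e.
Proof.
move=> e_graph e_conn m; have [[x0 _] _] := e_conn.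
have [ups ups_sym] := clique_union_upsilon m e_graph e_conn.
exists ('I_m * T)%type, (@clique_union m T), m; split=> //; first exact: clique_union_graph.
by rewrite leq_pmull //; apply/card_gt0P; exists x0.
Qed.

Lemma no_hanging_degree (T : finType) (e : rel T) x :
  connected (fun x y : T => e x y) -> no_hanging_edges e -> 1 < #|T| -> 1 < degree e x.
Proof.
move=> [_ e_conn] no_hang /card_gt1P [a [b [_ _ ab]]].
have [y xy] : exists y, x <> y.
  by have [<-|ax] := eqVneq a x; [exists b; apply/eqP | exists a; apply/eqP; rewrite eq_sym].
have [z exz] := clos_refl_trans_first_step xy (e_conn x y).
have : 0 < degree e x by apply/card_gt0P; exists z; rewrite inE.
rewrite leq_eqVlt => /orP [/eqP deg1 | //].
by case: no_hang; exists x, z; split=> //; left.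
Qed.

Lemma no_hanging_costly_in_connected (T : finType) (e : rel T) :
  is_graph (fun x y : T => e x y) -> connected (fun x y : T => e x y) ->
  no_hanging_edges e -> vertex_costly_in connected e.
Proof.
move=> e_graph e_conn no_hang m; have [[x0 _] _] := e_conn.
have m_le : m <= #|T| * m.+1.
  by rewrite (leq_trans (leqnSn m)) // leq_pmull //; apply/card_gt0P; exists x0.
have [T_gt1 | T_le1] := ltnP 1 #|T|.
- have deg x := no_hanging_degree x e_conn no_hang T_gt1.
  have [ups ups_sym] := @hub_upsilon T m.+1 #|T|.+1 e x0 e_graph e_conn deg (ltnSn _).
  exists (option ('I_m.+1 * T * 'I_#|T|.+2)), (@hub_adj T m.+1 #|T|.+1), m.+1.
  by split=> //; [apply: hub_adj_graph | apply: hub_connected].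
- have T1 : forall x y : T, x = y by move: T_le1 => /card_le1_eqP T1 x y; apply: T1.
  have [ups ups_sym] := complete_upsilon m.+1 x0 e_graph T1.
  exists ('I_m.+1 * T)%type, (@complete ('I_m.+1 * T)), m.+1.
  by split=> //; [apply: complete_graph | apply: complete_connected (ord0, x0)].
Qed.

Theorem theorem1 :
  (forall (T : finType) (e : rel T),
      is_graph (fun x y : T => e x y) ->
      (vertex_costly e <-> connected (fun x y : T => e x y))) /\
  (forall (T : finType) (e : rel T),
      is_graph (fun x y : T => e x y) ->
      connected (fun x y : T => e x y) ->
      no_hanging_edges e ->
      vertex_costly_in connected e).
Proof.
split=> [T e e_graph | T e]; last exact: no_hanging_costly_in_connected.
by split; [apply: costly_connected | apply: connected_costly].
Qed.
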